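(* Let $a,b\in\mathbb R$, $\sigma\in(0,1]$, $t\in[0,1]$, and let $\mu=(1-t)\gamma_{a,\sigma}+t\gamma_{b,\sigma}$. Suppose \[ \min(t,1-t)\ge2\exp\Big(-\frac{(b-a)^2}{32}\Big). \] Then for every $p\ge1$, \[ \inf_{m\in\mathbb R}\mathrm W_p^p(\mu,\gamma_{m,1})\ge\min(t,1-t)\,\frac{|b-a|^p}{4^{p+1}}. \]
   Context: On $\mathbb R$, $\gamma_{a,s}$ denotes the Gaussian measure with mean $a$ and variance $s$. $\mathrm W_p(\mu,\nu)=\inf\mathbb E[|X-Y|^p]^{1/p}$, the infimum over all couplings $(X,Y)$ of $(\mu,\nu)$. *)

From HB Require Import structures.
From mathcomp Require Import all_boot all_order all_algebra.
From mathcomp Require Import all_classical all_reals all_analysis.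
From mathcomp Require Import normal_distribution.
Set Implicit Arguments. Unset Strict Implicit. Unset Printing Implicit Defensive.
Import Order.TTheory GRing.Theory Num.Theory.
Local Open Scope classical_set_scope.
Local Open Scope ring_scope.

(* gamma_{a,s}: Gaussian with mean a and VARIANCE s (std. deviation sqrt s);
   normal_prob m s of the library is parameterised by the standard deviation. *)
Definition gauss {R : realType} (a s : R) : set R -> \bar R :=
  normal_prob a (Num.sqrt s).

Definition gmix {R : realType} (a b s t : R) : set R -> \bar R :=
  fun A => ((1 - t)%:E * gauss a s A + t%:E * gauss b s A)%E.

Definition coupling {R : realType} (mu nu : set R -> \bar R)
  (pi : probability (R * R)%type R) : Prop :=
  forall A : set R, measurable A ->
    pi (A `*` setT) = mu A /\ pi (setT `*` A) = nu A.

Definition Wpp {R : realType} (mu nu : set R -> \bar R) (p : R) : \bar R :=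
  ereal_inf [set (\int[pi]_z ((`|z.1 - z.2| `^ p)%:E))%E
            | pi in [set pi | coupling mu nu pi]].

From HB Require Import structures.
From mathcomp Require Import all_boot all_order all_algebra.
From mathcomp Require Import all_classical all_reals all_analysis.
From mathcomp Require Import normal_distribution measurable_realfun ring lra.
Set Implicit Arguments. Unset Strict Implicit. Unset Printing Implicit Defensive.
Import Order.TTheory GRing.Theory Num.Theory.
Local Open Scope classical_set_scope.
Local Open Scope ring_scope.

(* Let x = |b - a| / 4 and eps = min(t, 1 - t).  Whichever of a, b is farther
   from m, call it c, lies at distance at least 2x from m, and the half-line
   beyond c (away from m) carries mixture mass at least eps/2, because its own
   component gives it mass 1/2.  The hypothesis says exactly that
   2 exp(-x^2/2) <= eps, so by the Gaussian tail bound gamma_{m,1} gives the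
   half-line starting x before c mass at most eps/4.  In any coupling, mass at
   least eps/2 - eps/4 therefore moves by at least x, whence
   E|X - Y|^p >= x^p eps/4 = eps |b - a|^p / 4^(p+1). *)

Section normal_symmetry.
Context {R : realType}.
Local Notation mu := (@lebesgue_measure R).

Definition reflect_at (c : R) (x : measurableTypeR R) : measurableTypeR R :=
  2 * c - x.

Lemma measurable_reflect_at c : measurable_fun [set: R] (reflect_at c).
Proof. exact: measurable_funB. Qed.

HB.instance Definition _ c :=
  isMeasurableFun.Build _ _ _ _ (reflect_at c) (measurable_reflect_at c).

Lemma lebesgue_measure_reflect c (A : set R) : measurable A ->
  pushforward mu (reflect_at c) A = mu A.
Proof.
move=> mA; apply/esym/lebesgue_measure_unique => //= _ [[x y]] _ <-.
rewrite /pushforward.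
have -> : reflect_at c @^-1` `]x, y] = `[2 * c - y, 2 * c - x[%classic.
  by apply/seteqP; split => z /=; rewrite /reflect_at !in_itv/= => /andP[];
    rewrite ?ltrBlDl ?lerBrDr ?lerBlDl ?ltrBrDr => *; apply/andP; lra.
rewrite !lebesgue_measure_itv/= !lte_fin ltrD2l ltrN2.
by case: ifP => // _; congr EFin; ring.
Qed.

Lemma measurable_EFin_normal_pdf c s (D : set R) :
  measurable_fun D (fun x => (normal_pdf c s x)%:E).
Proof.
have : measurable_fun [set: R] (fun x => (normal_pdf c s x)%:E).
  by apply/measurable_EFinP; exact: measurable_normal_pdf.
exact: measurable_funTS.
Qed.

(* For [s = 0] the library's [normal_pdf] is the indicator of [[0, 1]]. *)
Lemma normal_pdf_reflect c s x : s != 0 ->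
  normal_pdf c s (reflect_at c x) = normal_pdf c s x.
Proof.
move=> s0; rewrite /normal_pdf (negbTE s0) /normal_fun /reflect_at.
by have -> : (2 * c - x - c) ^+ 2 = (x - c) ^+ 2 by ring.
Qed.

Lemma normal_prob_reflect c s (A : set R) : s != 0 -> measurable A ->
  normal_prob c s (reflect_at c @^-1` A) = normal_prob c s A.
Proof.
move=> s0 mA; rewrite /normal_prob.
rewrite [RHS](eq_measure_integral (pushforward mu (reflect_at c))); last first.
  by move=> B mB _; exact/esym/lebesgue_measure_reflect.
rewrite ge0_integral_pushforward//.
- by apply: eq_integral => x _; rewrite /= normal_pdf_reflect.
- exact: (@measurable_EFin_normal_pdf c s A).
- by move=> x _; rewrite lee_fin normal_pdf_ge0.
Qed.

End normal_symmetry.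

Section probability_half.
Context d (T : measurableType d) (R : realType) (P : probability T R).

Lemma probability_fineK (A : set T) : measurable A -> (fine (P A))%:E = P A.
Proof.
move=> mA; rewrite fineK// ge0_fin_numE ?measure_ge0//.
by rewrite (le_lt_trans (probability_le1 P mA)) ?ltry.
Qed.

Lemma probability_ge_half_of_cover (A B : set T) :
  measurable A -> measurable B -> P A = P B -> A `|` B = [set: T] ->
  ((2^-1)%:E <= P A)%E.
Proof.
move=> mA mB PAB AB.
have : (1 <= P A + P B)%E by rewrite -(probability_setT P) -AB measureU2.
rewrite -PAB -(probability_fineK mA) -EFinD !lee_fin; lra.
Qed.

Lemma probability_le_half_of_disjoint (A B : set T) :
  measurable A -> measurable B -> P A = P B -> A `&` B = set0 ->
  (P A <= (2^-1)%:E)%E.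
Proof.
move=> mA mB PAB AB.
have : (P A + P B <= 1)%E.
  by rewrite -measureU// probability_le1//; exact: measurableU.
rewrite -PAB -(probability_fineK mA) -EFinD !lee_fin; lra.
Qed.

End probability_half.

Section normal_halflines.
Context {R : realType}.
Variables (c s : R).
Hypothesis s0 : s != 0.

Let reflect_closed_right :
  reflect_at c @^-1` `[c, +oo[%classic = `]-oo, c]%classic.
Proof.
by apply/seteqP; split => x /=; rewrite /reflect_at !in_itv/= ?andbT => h; lra.
Qed.

Let reflect_open_right :
  reflect_at c @^-1` `]c, +oo[%classic = `]-oo, c[%classic.
Proof.
by apply/seteqP; split => x /=; rewrite /reflect_at !in_itv/= ?andbT => h; lra.
Qed.

Let normal_prob_closed_sym :
  normal_prob c s `[c, +oo[%classic = normal_prob c s `]-oo, c]%classic.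
Proof. by rewrite -reflect_closed_right normal_prob_reflect. Qed.

Lemma normal_prob_closed_right_ge_half :
  ((2^-1)%:E <= normal_prob c s `[c, +oo[%classic)%E.
Proof.
apply: (probability_ge_half_of_cover _ _ normal_prob_closed_sym) => //.
apply/seteqP; split => x //= _; rewrite !in_itv/= ?andbT.
by case: (lerP c x) => h; [left|right; apply: ltW].
Qed.

Lemma normal_prob_closed_left_ge_half :
  ((2^-1)%:E <= normal_prob c s `]-oo, c]%classic)%E.
Proof. by rewrite -normal_prob_closed_sym normal_prob_closed_right_ge_half. Qed.

Lemma normal_prob_open_right_le_half :
  (normal_prob c s `]c, +oo[%classic <= (2^-1)%:E)%E.
Proof.
have sym : normal_prob c s `]c, +oo[%classic = normal_prob c s `]-oo, c[%classic.
  by rewrite -reflect_open_right normal_prob_reflect.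
apply: (probability_le_half_of_disjoint _ _ sym) => //.
apply/seteqP; split => x //= []; rewrite !in_itv/= ?andbT => h1 h2.
by have := lt_trans h1 h2; rewrite ltxx.
Qed.

End normal_halflines.

Section normal_tail.
Context {R : realType}.
Local Notation mu := (@lebesgue_measure R).
Variables (m s : R).
Hypothesis s0 : s != 0.

Lemma normal_pdf_le_shift (y x : R) : 0 <= y -> m + y <= x ->
  normal_pdf m s x <= expR (- y ^+ 2 / (s ^+ 2 *+ 2)) * normal_pdf (m + y) s x.
Proof.
move=> y0 yx; rewrite /normal_pdf (negbTE s0) /normal_fun mulrCA -expRD.
rewrite ler_wpM2l ?normal_peak_ge0// ler_expR -mulrDl ler_pM2r; last first.
  by rewrite invr_gt0 mulrn_wgt0// exprn_even_gt0.
have : 0 <= y * (x - (m + y)) by rewrite mulr_ge0// subr_ge0.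
have -> : (x - m) ^+ 2 = (x - (m + y)) ^+ 2 + 2 * (y * (x - (m + y))) + y ^+ 2.
  by ring.
lra.
Qed.

Lemma normal_prob_right_tail (y : R) : 0 <= y ->
  (normal_prob m s `](m + y)%R, +oo[%classic
    <= (expR (- y ^+ 2 / (s ^+ 2 *+ 2)) / 2)%:E)%E.
Proof.
move=> y0; set e := expR _.
apply: (@le_trans _ _ (\int[mu]_(x in `](m + y)%R, +oo[)
    (e%:E * (normal_pdf (m + y) s x)%:E))%E).
  apply: ge0_le_integral => //.
  - by move=> x _; rewrite lee_fin normal_pdf_ge0.
  - exact: measurable_EFin_normal_pdf.
  - by apply: measurable_funeM; exact: measurable_EFin_normal_pdf.
  move=> x; rewrite /= in_itv/= andbT => yx; rewrite -EFinM lee_fin.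
  exact/normal_pdf_le_shift/ltW.
rewrite ge0_integralZl//; first last.
  - by rewrite lee_fin expR_ge0.
  - by move=> x _; rewrite lee_fin normal_pdf_ge0.
  - exact: measurable_EFin_normal_pdf.
rewrite EFinM lee_wpmul2l ?lee_fin ?expR_ge0//.
exact: normal_prob_open_right_le_half.
Qed.

End normal_tail.

Section coupling_moment.
Context {R : realType}.

Lemma measurable_abs_ge d (T : measurableType d) (f : T -> R) (r : R) :
  measurable_fun [set: T] f -> measurable [set z | r <= `|f z|].
Proof.
move=> mf; have mnf : measurable_fun [set: T] (fun z => `|f z|).
  exact: measurableT_comp.
have := mnf measurableT _ (measurable_itv `[r, +oo[).
by rewrite setTI; congr measurable; apply/seteqP; split => z /=;
  rewrite in_itv/= andbT.
Qed.

Lemma powR_markov d (T : measurableType d) (mu : {measure set T -> \bar R})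
    (f : T -> R) (r p : R) :
  measurable_fun [set: T] f -> 0 <= r -> 0 <= p ->
  ((r `^ p)%:E * mu [set z | (r <= `|f z|)%R]
    <= \int[mu]_z (`|f z| `^ p)%:E)%E.
Proof.
move=> mf r0 p0; have mE := measurable_abs_ge r mf.
have mF : measurable_fun [set: T] (fun z => (`|f z| `^ p)%:E).
  by apply/measurable_EFinP/(measurableT_comp (measurable_powR p));
    exact: measurableT_comp.
rewrite -integral_cst//.
apply: (@le_trans _ _
  (\int[mu]_(z in [set z | (r <= `|f z|)%R]) (`|f z| `^ p)%:E)%E).
  apply: ge0_le_integral => //.
  - by move=> z _; rewrite lee_fin powR_ge0.
  - exact: measurable_funTS.
  - by move=> z /= rf; rewrite lee_fin ge0_ler_powR// nnegrE (le_trans r0).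
apply: ge0_subset_integral => //.
Qed.

Variables (mu nu : set R -> \bar R) (pi : probability (R * R)%type R).
Hypothesis cpl : coupling mu nu pi.

Let measurable_dist : measurable_fun [set: R * R] (fun z : R * R => z.1 - z.2).
Proof. by apply: measurable_funB; [exact: measurable_fst|exact: measurable_snd]. Qed.

(* The mass of [A] that is not sent into [B] moves by at least [r]. *)
Lemma coupling_le_far_mass (r : R) (A B : set R) :
  measurable A -> measurable B ->
  (forall u v, A u -> ~ B v -> r <= `|u - v|) ->
  (mu A <= pi [set z | (r <= `|z.1 - z.2|)%R] + nu B)%E.
Proof.
move=> mA mB AB; have [<- _] := cpl mA; have [_ <-] := cpl mB.
apply: le_trans (measureU2 _ _ _); first last.
- exact: measurableX.
- exact: measurable_abs_ge.
apply: le_measure; rewrite ?inE.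
- exact: measurableX.
- by apply: measurableU; [exact: measurable_abs_ge|exact: measurableX].
move=> [u v] [/= Au _]; have [Bv|nBv] := pselect (B v); first by right.
by left; exact: AB.
Qed.

Lemma coupling_moment_ge (p r al be : R) (A B : set R) :
  measurable A -> measurable B -> 0 <= r -> 0 <= p ->
  (forall u v, A u -> ~ B v -> r <= `|u - v|) ->
  (al%:E <= mu A)%E -> (nu B <= be%:E)%E ->
  ((r `^ p * (al - be))%:E <= \int[pi]_z ((`|z.1 - z.2| `^ p)%:E))%E.
Proof.
move=> mA mB r0 p0 AB alA Bbe.
have mE := measurable_abs_ge r measurable_dist.
have far : (al%:E <= pi [set z | (r <= `|z.1 - z.2|)%R] + be%:E)%E.
  exact: le_trans alA (le_trans (coupling_le_far_mass mA mB AB) (leeD2l _ Bbe)).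
apply: le_trans (powR_markov pi measurable_dist r0 p0); rewrite /=.
rewrite -(probability_fineK pi mE) -EFinM lee_fin ler_wpM2l ?powR_ge0//.
by move: far; rewrite -(probability_fineK pi mE) -EFinD lee_fin; lra.
Qed.

End coupling_moment.

Section gaussian_mixture.
Context {R : realType}.

Lemma gauss_halfline_ge_half (c s : R) (A : set R) : 0 < s ->
  A = `[c, +oo[%classic \/ A = `]-oo, c]%classic ->
  ((2^-1)%:E <= gauss c s A)%E.
Proof.
move=> s0; have ss0 : Num.sqrt s != 0 by rewrite gt_eqF// sqrtr_gt0.
case=> ->; [exact: normal_prob_closed_right_ge_half|].
exact: normal_prob_closed_left_ge_half.
Qed.

Lemma gmix_halfline_ge (a b s t c : R) (A : set R) : 0 < s -> 0 <= t <= 1 ->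
  c = a \/ c = b -> A = `[c, +oo[%classic \/ A = `]-oo, c]%classic ->
  ((Num.min t (1 - t) / 2)%:E <= gmix a b s t A)%E.
Proof.
move=> s0 /andP[t0 t1] ca cA; set eps := Num.min t (1 - t).
have mA : measurable A by case: cA => ->.
have weighted w : 0 <= w -> eps <= w -> ((eps / 2)%:E <= w%:E * gauss c s A)%E.
  move=> w0 epsw; apply: le_trans (lee_wpmul2l _ (gauss_halfline_ge_half s0 cA)).
    by rewrite -EFinM lee_fin ler_wpM2r.
  by rewrite lee_fin.
rewrite /gmix; case: ca => ?; subst c.
- apply: le_trans (leeDl _ _); first by apply: weighted; rewrite ?ge_min ?lexx ?orbT ?subr_ge0.
  by rewrite mule_ge0 ?lee_fin ?measure_ge0.
- apply: le_trans (leeDr _ _); first by apply: weighted; rewrite ?ge_min ?lexx.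
  by rewrite mule_ge0 ?lee_fin ?subr_ge0 ?measure_ge0.
Qed.

Lemma gauss1_right_tail_le (m x y eps : R) : 0 <= x <= y ->
  2 * expR (- x ^+ 2 / 2) <= eps ->
  (gauss m 1 `](m + y)%R, +oo[%classic <= (eps / 4)%:E)%E.
Proof.
move=> /andP[x0 xy] hx; rewrite /gauss sqrtr1.
apply: le_trans (normal_prob_right_tail m (oner_neq0 R) (le_trans x0 xy)) _.
rewrite lee_fin expr1n.
have : expR (- y ^+ 2 / 2) <= expR (- x ^+ 2 / 2).
  by rewrite ler_expR ler_pM2r// lerN2 ler_sqr// nnegrE (le_trans x0).
lra.
Qed.

Lemma gauss1_left_tail_le (m x y eps : R) : 0 <= x <= y ->
  2 * expR (- x ^+ 2 / 2) <= eps ->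
  (gauss m 1 `]-oo, (m - y)%R[%classic <= (eps / 4)%:E)%E.
Proof.
move=> xy hx; have := gauss1_right_tail_le m xy hx.
have -> : `]-oo, (m - y)%R[%classic = reflect_at m @^-1` `](m + y)%R, +oo[%classic.
  by apply/seteqP; split => z /=; rewrite /reflect_at !in_itv/= ?andbT => h; lra.
by rewrite /gauss sqrtr1 normal_prob_reflect ?oner_neq0.
Qed.

End gaussian_mixture.

Section coupling_with_gauss.
Context {R : realType}.
Variables (mu : set R -> \bar R) (pi : probability (R * R)%type R).
Variables (m x eps p : R).
Hypotheses (cpl : coupling mu (gauss m 1) pi) (x0 : 0 <= x) (p0 : 0 <= p).
Hypothesis hx : 2 * expR (- x ^+ 2 / 2) <= eps.

Lemma coupling_gauss_moment_ge_right (c : R) : m + 2 * x <= c ->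
  ((eps / 2)%:E <= mu `[c, +oo[%classic)%E ->
  ((x `^ p * (eps / 4))%:E <= \int[pi]_z ((`|z.1 - z.2| `^ p)%:E))%E.
Proof.
move=> mc cA.
have tail : (gauss m 1 `](c - x)%R, +oo[%classic <= (eps / 4)%:E)%E.
  have -> : c - x = m + (c - x - m) by ring.
  by apply: gauss1_right_tail_le hx; apply/andP; split => //; lra.
apply: le_trans (coupling_moment_ge cpl (measurable_itv _) (measurable_itv _)
  x0 p0 _ cA tail); last first.
  move=> u v /=; rewrite !in_itv/= !andbT => cu /negP; rewrite -leNgt => vc.
  by apply: le_trans (ler_norm _); lra.
by rewrite lee_fin ler_wpM2l ?powR_ge0//; lra.
Qed.

Lemma coupling_gauss_moment_ge_left (c : R) : c + 2 * x <= m ->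
  ((eps / 2)%:E <= mu `]-oo, c]%classic)%E ->
  ((x `^ p * (eps / 4))%:E <= \int[pi]_z ((`|z.1 - z.2| `^ p)%:E))%E.
Proof.
move=> cm cA.
have tail : (gauss m 1 `]-oo, (c + x)%R[%classic <= (eps / 4)%:E)%E.
  have -> : c + x = m - (m - c - x) by ring.
  by apply: gauss1_left_tail_le hx; apply/andP; split => //; lra.
apply: le_trans (coupling_moment_ge cpl (measurable_itv _) (measurable_itv _)
  x0 p0 _ cA tail); last first.
  move=> u v /=; rewrite !in_itv/= => uc /negP; rewrite -leNgt => cv.
  by rewrite distrC; apply: le_trans (ler_norm _); lra.
by rewrite lee_fin ler_wpM2l ?powR_ge0//; lra.
Qed.

End coupling_with_gauss.

Lemma far_mode {R : realType} (a b m : R) : exists2 c, c = a \/ c = b &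
  m + `|b - a| / 2 <= c \/ c + `|b - a| / 2 <= m.
Proof.
have [ab|ba] := lerP a b; have [mab|mab] := lerP m ((a + b) / 2).
- by exists b; [right|left; lra].
- by exists a; [left|right; lra].
- by exists a; [left|left; lra].
- by exists b; [right|right; lra].
Qed.

Lemma powR_mul_div {R : realType} (k x p : R) : 0 < k -> 0 <= x ->
  (k * x) `^ p / k `^ (p + 1) = x `^ p / k.
Proof.
move=> k0 x0; rewrite powRM ?(ltW k0)// powRD ?(gt_eqF k0) ?implybT//.
rewrite powRr1 ?(ltW k0)//.
by field; rewrite (gt_eqF k0) gt_eqF ?powR_gt0.
Qed.

Theorem lemma3 (R : realType) (a b sigma t p : R) :
  0 < sigma <= 1 -> 0 <= t <= 1 ->
  2 * expR (- (b - a) ^+ 2 / 32) <= Num.min t (1 - t) ->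
  1 <= p ->
  ((Num.min t (1 - t) * (`|b - a| `^ p / 4 `^ (p + 1)))%:E
     <= ereal_inf [set Wpp (gmix a b sigma t) (gauss m 1) p | m in [set: R]])%E.
Proof.
move=> /andP[s0 _] t01 heps p1; have p0 : 0 <= p by lra.
set eps := Num.min t (1 - t) in heps *; set x := `|b - a| / 4.
have x0 : 0 <= x by rewrite divr_ge0.
have hx : 2 * expR (- x ^+ 2 / 2) <= eps.
  suff -> : - x ^+ 2 / 2 = - (b - a) ^+ 2 / 32 by [].
  by rewrite /x expr_div_n real_normK ?num_real//; field.
have -> : `|b - a| = 4 * x by rewrite /x mulrC divfK// pnatr_eq0.
rewrite powR_mul_div// mulrCA.
apply: le_ereal_inf_tmp => _ [m _ <-]; apply: le_ereal_inf_tmp => _ [pi cpl <-].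
have [c mode] := far_mode a b m.
have -> : `|b - a| / 2 = 2 * x by rewrite /x; field.
case=> far.
- apply: (coupling_gauss_moment_ge_right cpl x0 p0 hx (c := c)); first lra.
  by apply: (gmix_halfline_ge (c := c)) => //; left.
- apply: (coupling_gauss_moment_ge_left cpl x0 p0 hx (c := c)); first lra.
  by apply: (gmix_halfline_ge (c := c)) => //; right.
Qed.
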